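(* Let $u\in\mathbb{S}^{d-1}$, $\theta>0$, $0<\tilde c,\zeta<1$, and $b=\frac{\tilde c\zeta\theta}{\sqrt d}\le 1$. Let $w_t\in\mathbb{S}^{d-1}$ with $\theta_t:=\theta(w_t,u)\le\frac53\theta$, and let $(x_t,y_t)\in\mathbb{S}^{d-1}\times\{-1,+1\}$ be any labeled example with $w_t\cdot x_t\in[\frac b2,b]$ (e.g. drawn from $D$ conditioned on this event). Define $w_{t+1}=w_t-2\,\mathbb{1}\{y_t\,w_t\cdot x_t<0\}(w_t\cdot x_t)x_t$ and $\theta_{t+1}=\theta(w_{t+1},u)$. Then $|\cos\theta_{t+1}-\cos\theta_t|\le\frac{16\tilde c\zeta\theta^2}{3\sqrt d}$.
   Context: $\mathbb{S}^{d-1}$ is the unit sphere in $\mathbb{R}^d$; $\theta(v_1,v_2)=\arccos(v_1\cdot v_2)$ for unit vectors. (The update preserves unit norm.) *)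

From HB Require Import structures.
From mathcomp Require Import all_boot all_order all_algebra.
From mathcomp Require Import all_classical all_reals all_analysis.
Set Implicit Arguments. Unset Strict Implicit. Unset Printing Implicit Defensive.
Import Order.TTheory GRing.Theory Num.Theory.
Local Open Scope ring_scope.

Definition dotv {R : realType} {d : nat} (u v : 'rV[R]_d) : R :=
  \sum_(i < d) u 0 i * v 0 i.

Definition normv {R : realType} {d : nat} (v : 'rV[R]_d) : R :=
  Num.sqrt (dotv v v).

Definition on_sphere {R : realType} {d : nat} (v : 'rV[R]_d) : Prop :=
  normv v = 1.

Definition angle {R : realType} {d : nat} (v1 v2 : 'rV[R]_d) : R :=
  acos (dotv v1 v2).

Definition update {R : realType} {d : nat} (w x : 'rV[R]_d) (y : R) : 'rV[R]_d :=
  w - ((2 * (if y * dotv w x < 0 then 1 else 0) * dotv w x) *: x).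

(* The update either leaves w unchanged or reflects it across the hyperplane
   orthogonal to x, so w stays on the sphere and cos theta changes by
   -2 (w.x)(x.u).  Since x is a unit vector, |x.u - x.w| <= |u - w|, and the chord
   |u - w| = 2 sin (theta_t / 2) is at most the arc theta_t <= 5/3 theta.  As
   sqrt d >= 1 we have b <= theta, hence the change is at most
   2 b (b + 5/3 theta) <= 16/3 b theta. *)
From HB Require Import structures.
From mathcomp Require Import all_boot all_order all_algebra.
From mathcomp Require Import all_classical all_reals all_analysis.
From mathcomp Require Import ring lra.
Set Implicit Arguments. Unset Strict Implicit. Unset Printing Implicit Defensive.
Import Order.TTheory GRing.Theory Num.Theory.
Local Open Scope classical_set_scope.
Local Open Scope ring_scope.

Lemma sin_le_id {R : realType} (s : R) : 0 <= s -> sin s <= s.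
Proof.
rewrite le_eqVlt => /predU1P[<-|s_gt0]; first by rewrite sin0.
have derivative (t : R) : is_derive t 1 (fun t => t - sin t) (1 - cos t).
  exact: is_deriveB.
have continuity : {within `[0, s], continuous (fun t : R => t - sin t)}.
  apply: continuous_subspaceT => t.
  exact: continuousB (@cvg_id _ _) (@continuous_sin R t).
have [c _] := MVT s_gt0 (fun t _ => derivative t) continuity.
rewrite sin0 !subr0 => mvt.
by rewrite -subr_ge0 mvt mulr_ge0 // ?subr_ge0 ?cos_le1 // ltW.
Qed.

Lemma one_sub_cos_le {R : realType} (t : R) :
  0 <= t <= pi -> 1 - cos t <= t ^+ 2 / 2.
Proof.
move=> /andP[t_ge0 t_lepi].
have half_angle : cos t = 1 - 2 * sin (t / 2) ^+ 2.
  by rewrite {1}(splitr t) cosD -!expr2 cos2sin2; ring.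
have sin_ge0 : 0 <= sin (t / 2).
  by apply: sin_ge0_pi; rewrite divr_ge0 //= ler_pdivrMr //; nra.
have : sin (t / 2) <= t / 2 by apply: sin_le_id; rewrite divr_ge0.
rewrite half_angle; nra.
Qed.

Section DotProduct.
Context {R : realType} {d : nat}.
Implicit Types (a b c u w x : 'rV[R]_d) (y : R).

Lemma dotvC a b : dotv a b = dotv b a.
Proof. by apply: eq_bigr => i _; rewrite mulrC. Qed.

Lemma dotvBl a b c : dotv (a - b) c = dotv a c - dotv b c.
Proof. by rewrite /dotv -sumrB; apply: eq_bigr => i _; rewrite !mxE mulrBl. Qed.

Lemma dotvZl k a c : dotv (k *: a) c = k * dotv a c.
Proof. by rewrite /dotv mulr_sumr; apply: eq_bigr => i _; rewrite !mxE mulrA. Qed.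

Lemma dotvBr a b c : dotv c (a - b) = dotv c a - dotv c b.
Proof. by rewrite dotvC dotvBl !(dotvC c). Qed.

Lemma dotvZr k a c : dotv c (k *: a) = k * dotv c a.
Proof. by rewrite dotvC dotvZl dotvC. Qed.

Lemma dotvv_ge0 a : 0 <= dotv a a.
Proof. by apply: sumr_ge0 => i _; rewrite -expr2 sqr_ge0. Qed.

Lemma sphere_dotvv a : on_sphere a -> dotv a a = 1.
Proof. by rewrite /on_sphere /normv => h; rewrite -(sqr_sqrtr (dotvv_ge0 a)) h expr1n. Qed.

Lemma sphere_dim_gt0 a : on_sphere a -> (0 < d)%N.
Proof.
move/sphere_dotvv; case: d a => // a; rewrite /dotv big_ord0 => /eqP.
by rewrite eq_sym oner_eq0.
Qed.

Lemma dotv_sqr_le_unit a x : dotv x x = 1 -> dotv a x ^+ 2 <= dotv a a.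
Proof.
move=> xx; have := dotvv_ge0 (a - dotv a x *: x).
rewrite !dotvBl !dotvBr !dotvZl !dotvZr xx (dotvC x a).
by move=> h; rewrite -subr_ge0; move: h; congr (_ <= _); ring.
Qed.

Lemma sphere_dotv_itv a b : on_sphere a -> on_sphere b -> -1 <= dotv a b <= 1.
Proof.
move=> /sphere_dotvv aa /sphere_dotvv bb.
have := dotv_sqr_le_unit a bb; rewrite aa => sqr_le1.
apply/andP; split; nra.
Qed.

Lemma cos_angle a b : on_sphere a -> on_sphere b -> cos (angle a b) = dotv a b.
Proof. by move=> ha hb; rewrite acosK // in_itv /= sphere_dotv_itv. Qed.

Lemma dotv_sub_le_angle w u x : on_sphere w -> on_sphere u -> on_sphere x ->
  `|dotv u x - dotv w x| <= angle w u.
Proof.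
move=> hw hu hx; have wu := sphere_dotv_itv hw hu.
have angle_itv : 0 <= angle w u <= pi by rewrite acos_ge0 ?acos_lepi.
have chord_le : dotv (u - w) (u - w) <= angle w u ^+ 2.
  rewrite !dotvBl !dotvBr !sphere_dotvv // (dotvC u w) -(cos_angle hw hu).
  by have := one_sub_cos_le angle_itv; lra.
have := le_trans (dotv_sqr_le_unit (u - w) (sphere_dotvv hx)) chord_le.
rewrite dotvBl -real_normK ?num_real // => sqr_le.
by case/andP: angle_itv => angle_ge0 _; rewrite -(ler_pXn2r (isT : (0 < 2)%N)) ?nnegrE.
Qed.

Lemma update_sphere w x y : on_sphere w -> on_sphere x -> on_sphere (update w x y).
Proof.
move=> /sphere_dotvv ww /sphere_dotvv xx.
rewrite /on_sphere /normv.
suff -> : dotv (update w x y) (update w x y) = 1 by rewrite sqrtr1.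
rewrite /update !dotvBl !dotvBr !dotvZl !dotvZr ww xx (dotvC x w).
by case: ifP => _; ring.
Qed.

Lemma cos_angle_update_le w x y u :
  on_sphere w -> on_sphere x -> on_sphere u ->
  `|cos (angle (update w x y) u) - cos (angle w u)| <= 2 * `|dotv w x| * `|dotv x u|.
Proof.
move=> hw hx hu; have hw' := update_sphere y hw hx.
rewrite !cos_angle // /update dotvBl dotvZl addrAC subrr add0r normrN.
by case: ifP => _; rewrite ?mulr1 ?mulr0 ?mul0r ?normr0 // !normrM normr_nat.
Qed.

End DotProduct.

Theorem lemma6 (R : realType) (d : nat) (u w x : 'rV[R]_d) (y theta c zeta b : R)
  (hu : on_sphere u) (htheta : 0 < theta)
  (hc0 : 0 < c) (hc1 : c < 1) (hz0 : 0 < zeta) (hz1 : zeta < 1)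
  (hb : b = c * zeta * theta / Num.sqrt (d%:R)) (hb1 : b <= 1)
  (hw : on_sphere w) (hwu : angle w u <= 5 / 3 * theta)
  (hx : on_sphere x) (hy : y = 1 \/ y = -1)
  (hwx : b / 2 <= dotv w x <= b) :
  `| cos (angle (update w x y) u) - cos (angle w u) |
    <= 16 * c * zeta * theta ^+ 2 / (3 * Num.sqrt (d%:R)).
Proof.
have [wx_lb wx_ub] := andP hwx.
have b_ge0 : 0 <= b by lra.
have wx_ge0 : 0 <= dotv w x by lra.
have sqrtd_ge1 : 1 <= Num.sqrt (d%:R) :> R.
  by rewrite -{1}sqrtr1 ler_sqrt // ler1n (sphere_dim_gt0 hw).
have sqrtd_neq0 : Num.sqrt (d%:R) != 0 :> R by rewrite gt_eqF // (lt_le_trans ltr01).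
have b_le_theta : b <= theta.
  have : b <= b * Num.sqrt (d%:R) by rewrite ler_peMr.
  have cz_le1 : c * zeta <= 1 by nra.
  rewrite hb divfK //; nra.
have -> : 16 * c * zeta * theta ^+ 2 / (3 * Num.sqrt (d%:R)) = 16 / 3 * theta * b.
  by rewrite hb; field.
have xu_le : `|dotv x u| <= b + 5 / 3 * theta.
  rewrite dotvC -(subrK (dotv w x) (dotv u x)); apply: le_trans (ler_normD _ _) _.
  rewrite addrC (ger0_norm wx_ge0) lerD //.
  exact: le_trans (dotv_sub_le_angle hw hu hx) hwu.
apply: le_trans (cos_angle_update_le y hw hx hu) _.
apply: (@le_trans _ _ (2 * b * (b + 5 / 3 * theta))).
  by rewrite (ger0_norm wx_ge0) -2!mulrA ler_pM2l // ler_pM.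
have : 0 <= b * (theta - b) by rewrite mulr_ge0 // subr_ge0.
nra.
Qed.
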